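(* Let $n\in\mathbb{N}$, $a<b$, let $Z=\{z_i:i\in\mathbb{Z}\}$ be $n$-close on $(a,b)$, and let $F:[a,b]\to\mathbb{R}$ be zig-zag of order $n$ with respect to $Z$ on $[a,b]$. Then $$|F(z_i)-F(z_{i+1})|\ge 2^n|z_i-z_{i+1}|\quad\text{for all } i.$$ Furthermore, let $\mathcal{F}=\{[z_i,z_{i+1}]:i\in\mathbb{Z}\}$, and let $U=\bigsqcup_{i\in J}(a_i,b_i)\subset(a,b)$ be an open set (written as the disjoint union of its components) which is trim on $\mathcal{F}$. Let $G:[a,b]\to\mathbb{R}$ satisfy $G(a)=G(b)=F(a)$ and $G|_{[z_i,z_{i+1}]}=g(F,[z_i,z_{i+1}],U)$ for all $i\in\mathbb{Z}$. Define $H(x)=G(x)+\sum_{i\in J}\Phi_{n,[a_i,b_i]}(x)$ for $x\in[a,b]$. Then $$H(x)\le G(a)+2\,\Phi_{n,[a,b]}(x)\quad\text{for all } x\in[a,b].$$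
   Context: $|\cdot|$ denotes Lebesgue measure. For a closed interval $I=[a,b]$ and $n\in\mathbb{N}$, $\Phi_{n,I}(x)=2^{-n}\min\{x-a,b-x\}$ if $x\in[a,b]$ and $\Phi_{n,I}(x)=0$ otherwise. A set $Z=\{z_j:j\in\mathbb{Z}\}$ is $n$-close on $(a,b)$ if $a<z_j<z_{j+1}<b$ for all $j\in\mathbb{Z}$, $z_j\to b$ as $j\to\infty$, $z_j\to a$ as $j\to-\infty$, and $z_{j+1}-z_j<4^{-n}\min\{z_j-a,\,b-z_{j+1}\}$ for all $j\in\mathbb{Z}$. If $Z$ is $n$-close on $(a,b)$, a function $F:[a,b]\to\mathbb{R}$ is zig-zag of order $n$ with respect to $Z$ on $[a,b]$ if $F(a)=F(b)$, $F(z_j)=F(a)$ for even $j$, $F(z_j)=F(a)+\Phi_{n,[a,b]}(z_j)$ for odd $j$, and $F$ is linear (affine) on $[z_j,z_{j+1}]$ for every $j\in\mathbb{Z}$. An open set $U$ is trim in a closed interval $[c,d]$ if $|U\cap[c,d]|<d-c$ and $c,d\notin U$; $U$ is trim on a collection $\mathcal{F}$ of pairwise non-overlapping closed intervals if it is trim in each interval of $\mathcal{F}$. For $f$ linear on $[c,d]$ and $U$ trim in $[c,d]$, $g(f,[c,d],U)$ is the function on $[c,d]$ given by $g(x)=f(c)+\frac{|([c,d]\setminus U)\cap[c,x]|}{|[c,d]\setminus U|}(f(d)-f(c))$. *)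

From HB Require Import structures.
From mathcomp Require Import all_boot all_order all_algebra.
From mathcomp Require Import all_classical all_reals all_analysis.
Set Implicit Arguments. Unset Strict Implicit. Unset Printing Implicit Defensive.
Import Order.TTheory GRing.Theory Num.Theory.
Import numFieldNormedType.Exports.
Local Open Scope classical_set_scope.
Local Open Scope ring_scope.

Definition Phi {R : realType} (n : nat) (a b x : R) : R :=
  if (a <= x) && (x <= b) then (2 ^+ n)^-1 * Num.min (x - a) (b - x) else 0.

Definition n_close {R : realType} (n : nat) (a b : R) (z : int -> R) : Prop :=
  (forall j : int, a < z j /\ z j < z (j + 1) /\ z (j + 1) < b) /\
  ((fun k : nat => z (k%:Z)) @ \oo --> b) /\
  ((fun k : nat => z (- k%:Z)) @ \oo --> a) /\
  (forall j : int, z (j + 1) - z j < (4 ^+ n)^-1 * Num.min (z j - a) (b - z (j + 1))).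

Definition affine_on {R : realType} (f : R -> R) (c d : R) : Prop :=
  exists alpha beta : R, forall x, c <= x <= d -> f x = alpha * x + beta.

(* F is zig-zag of order n w.r.t. Z on [a,b] (Z assumed n-close separately) *)
Definition zigzag {R : realType} (n : nat) (a b : R) (z : int -> R) (F : R -> R) : Prop :=
  F a = F b /\
  (forall j : int, (2 %| j)%Z -> F (z j) = F a) /\
  (forall j : int, ~~ (2 %| j)%Z -> F (z j) = F a + Phi n a b (z j)) /\
  (forall j : int, affine_on F (z j) (z (j + 1))).

Definition trim_in {R : realType} (U : set R) (c d : R) : Prop :=
  open U /\ (lebesgue_measure (U `&` `[c, d]) < (d - c)%:E)%E /\ ~ U c /\ ~ U d.

Definition gfun {R : realType} (f : R -> R) (c d : R) (U : set R) (x : R) : R :=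
  f c + fine (lebesgue_measure ((`[c, d] `\` U) `&` `[c, x]))
        / fine (lebesgue_measure (`[c, d] `\` U)) * (f d - f c).

From HB Require Import structures.
From mathcomp Require Import all_boot all_order all_algebra.
From mathcomp Require Import all_classical all_reals all_analysis.
From mathcomp Require Import measurable_realfun.
From mathcomp Require Import lra zify.
Set Implicit Arguments. Unset Strict Implicit. Unset Printing Implicit Defensive.
Import Order.TTheory GRing.Theory Num.Theory.
Import numFieldNormedType.Exports.
Local Open Scope classical_set_scope.
Local Open Scope ring_scope.

(* - Steepness: on [z_i, z_{i+1}] the increment of F is the tent value at  *)
(*   the odd endpoint, 2^-n min(z_k - a, b - z_k); n-closeness makes the   *)
(*   step z_{i+1} - z_i smaller than 4^-n times that distance, hence the   *)
(*   slope is at least 2^n (lemma Phi_ge_steep).                           *)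
(* - Cap: for x in [z_j, z_{j+1}] =: [c, d], G(x) is a convex combination   *)
(*   of F(c), F(d), so G(x) <= F(a) + Phi_{n,[a,b]}(o) with o the odd      *)
(*   endpoint; the components (a_i, b_i) are disjoint, so at most one      *)
(*   contains x, and by trimness (c, d not in U) it lies inside [c, d]:    *)
(*   the sum of the tents at x is at most Phi_{n,[c,d]}(x).  Since [c, d] is short compared to  *)
(*   its distance to a and b, Phi(o) + Phi_{n,[c,d]}(x) <= 2 Phi(x)        *)
(*   (lemma Phi_endpoint_local).  The points x = a, b are handled apart.   *)

(* Case analysis on a minimum, in a form usable by [lra]. *)
Lemma min_cases (R : realDomainType) (y w : R) :
  (Num.min y w = y /\ y <= w) \/ (Num.min y w = w /\ w <= y).
Proof. by case: (leP y w) => h; [left|right]; split => //; exact: ltW. Qed.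

Section Tents.
Variables (R : realType) (n : nat).

Lemma Phi_in (a b x : R) : a <= x <= b ->
  Phi n a b x = (2 ^+ n)^-1 * Num.min (x - a) (b - x).
Proof. by rewrite /Phi => ->. Qed.

Lemma Phi_out (a b x : R) : ~ (a < x < b) -> Phi n a b x = 0.
Proof.
move=> hx; rewrite /Phi; case: ifP => // /andP[ax xb].
have -> : Num.min (x - a) (b - x) = 0; last by rewrite mulr0.
have x_end : x = a \/ x = b.
  move: ax xb; rewrite !le_eqVlt => /orP[/eqP->|ax]; first by left.
  by case/orP => [/eqP->|xb]; [right|case: hx; rewrite ax xb].
by case: (min_cases (x - a) (b - x)) => [[-> ?]|[-> ?]]; lra.
Qed.

Lemma Phi_ge0 (a b x : R) : 0 <= Phi n a b x.
Proof.
rewrite /Phi; case: ifP => // /andP[ax xb].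
rewrite mulr_ge0 ?invr_ge0 ?exprn_ge0 //.
by case: (min_cases (x - a) (b - x)) => [[-> ?]|[-> ?]]; lra.
Qed.

Lemma Phi_sub_itv (a b c d x : R) : c <= a -> b <= d ->
  Phi n a b x <= Phi n c d x.
Proof.
move=> ca bd; case: (boolP ((a <= x) && (x <= b))) => [hx|/negbTE hx]; last first.
  by rewrite /Phi hx Phi_ge0.
have /andP[ax xb] := hx.
rewrite !Phi_in ?(le_trans ca ax) ?(le_trans xb bd) //.
rewrite ler_pM2l ?invr_gt0 ?exprn_gt0 //.
case: (min_cases (x - a) (b - x)) => [[-> ?]|[-> ?]];
case: (min_cases (x - c) (d - x)) => [[-> ?]|[-> ?]]; lra.
Qed.

Lemma Phi_ge_steep (a b c d y : R) : a < c -> c <= y <= d -> d < b ->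
  d - c < (4 ^+ n)^-1 * Num.min (c - a) (b - d) ->
  2 ^+ n * (d - c) <= Phi n a b y.
Proof.
move=> ac /andP[cy yd] db gap; rewrite Phi_in; last by apply/andP; split; lra.
set K : R := 2 ^+ n; have K0 : 0 < K by rewrite exprn_gt0.
have K4 : (4 : R) ^+ n = K * K by rewrite -exprMn; congr (_ ^+ _); lra.
rewrite K4 in gap.
set m := Num.min (c - a) (b - d).
have m_le : m <= Num.min (y - a) (b - y).
  rewrite /m; case: (min_cases (c - a) (b - d)) => [[-> ?]|[-> ?]];
  case: (min_cases (y - a) (b - y)) => [[-> ?]|[-> ?]]; lra.
apply: (@le_trans _ _ (K^-1 * m)); last by rewrite ler_pM2l ?invr_gt0.
have : K * (d - c) <= K * ((K * K)^-1 * m) by rewrite ler_pM2l // ltW.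
by rewrite invfM !mulrA mulfV ?gt_eqF // mul1r.
Qed.

Lemma Phi_endpoint_local (a b c d o x : R) :
  d - c < Num.min (c - a) (b - d) -> (o = c \/ o = d) -> c <= x <= d ->
  Phi n a b o + Phi n c d x <= 2 * Phi n a b x.
Proof.
move=> gap ho /andP[cx xd].
have [ac db] : a < c /\ d < b.
  by case: (min_cases (c - a) (b - d)) => [[hm ?]|[hm ?]]; rewrite hm in gap; lra.
have in_ab y : c <= y <= d -> a <= y <= b by case/andP => ? ?; apply/andP; lra.
have o_cd : c <= o <= d by apply/andP; case: ho => ->; lra.
rewrite !Phi_in ?in_ab ?cx ?xd //.
rewrite mulrCA -mulrDr ler_pM2l ?invr_gt0 ?exprn_gt0 //.
case: (min_cases (c - a) (b - d)) => [[hm ?]|[hm ?]]; rewrite hm in gap;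
case: (min_cases (o - a) (b - o)) => [[-> ?]|[-> ?]];
case: (min_cases (x - c) (d - x)) => [[-> ?]|[-> ?]];
case: (min_cases (x - a) (b - x)) => [[-> ?]|[-> ?]]; case: ho => ho; lra.
Qed.

(* Over pairwise disjoint intervals at most one tent is nonzero at x, so the *)
(* sum of the tents at x is bounded by any bound on the tent containing x.   *)
Lemma esum_disjoint_Phi_le (J : choiceType) (a_ b_ : J -> R) (x B : R) :
  (forall i k, i <> k -> `]a_ i, b_ i[%classic `&` `]a_ k, b_ k[%classic = set0) ->
  0 <= B -> (forall i, a_ i < x < b_ i -> Phi n (a_ i) (b_ i) x <= B) ->
  (\esum_(i in [set: J]) (Phi n (a_ i) (b_ i) x)%:E <= B%:E)%E.
Proof.
move=> disj B0 hB.
case: (pselect (exists i, a_ i < x < b_ i)) => [[i0 xi0]|none]; last first.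
  by rewrite esum1 ?lee_fin // => i _; rewrite Phi_out // => xi; apply: none; exists i.
suff -> : (\esum_(i in [set: J]) (Phi n (a_ i) (b_ i) x)%:E =
    (Phi n (a_ i0) (b_ i0) x)%:E)%E by rewrite lee_fin hB.
rewrite -(@esum_set1 _ _ i0 (fun i => (Phi n (a_ i) (b_ i) x)%:E)); last first.
  by rewrite lee_fin Phi_ge0.
rewrite [RHS]esum_mkcond; apply: eq_esum => i _.
case: ifP => [/set_mem -> //|/negbT hi].
rewrite Phi_out // => xi; have ne : i <> i0 by move=> ii0; rewrite ii0 mem_set in hi.
have : (`]a_ i, b_ i[%classic `&` `]a_ i0, b_ i0[%classic) x.
  by split => /=; rewrite in_itv /=.
by rewrite disj.
Qed.

End Tents.

Lemma trim_complement_measure (R : realType) (U : set R) (c d : R) :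
  c < d -> trim_in U c d ->
  lebesgue_measure (`[c, d] `\` U) \is a fin_num /\
  0 < fine (lebesgue_measure (`[c, d] `\` U)).
Proof.
move=> cd [oU [small _]].
have cd_len : lebesgue_measure `[c, d]%classic = (d - c)%:E.
  by rewrite lebesgue_measure_itv /= lte_fin cd -EFinB.
have UI_fin : lebesgue_measure (U `&` `[c, d]) \is a fin_num.
  by rewrite ge0_fin_numE ?measure_ge0 // (lt_trans small) ?ltry.
have diff : lebesgue_measure (`[c, d] `\` U) =
    ((d - c)%:E - lebesgue_measure (U `&` `[c, d]))%E.
  have U_meas : measurable U by exact: open_measurable.
  rewrite measureD //=; last by rewrite cd_len ltry.
  by rewrite cd_len setIC.
split; first by rewrite diff fin_numB UI_fin.
by rewrite diff -(fineK UI_fin) -EFinB /= subr_gt0 -lte_fin fineK.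
Qed.

Lemma gfun_convex (R : realType) (f : R -> R) (U : set R) (c d x : R) :
  c < d -> trim_in U c d ->
  exists2 r, 0 <= r <= 1 & gfun f c d U x = f c + r * (f d - f c).
Proof.
move=> cd trim; have [A_fin A_pos] := trim_complement_measure cd trim.
have [oU _] := trim.
have A_meas : measurable (`[c, d] `\` U).
  by apply: measurableD; [exact: measurable_itv|exact: open_measurable].
have B_le : (lebesgue_measure ((`[c, d] `\` U) `&` `[c, x]) <=
             lebesgue_measure (`[c, d] `\` U))%E.
  by apply: le_measure; rewrite ?inE //; apply: measurableI => //; exact: measurable_itv.
have B_fin : lebesgue_measure ((`[c, d] `\` U) `&` `[c, x]) \is a fin_num.
  by rewrite ge0_fin_numE ?measure_ge0 // (le_lt_trans B_le) // -ge0_fin_numE ?measure_ge0.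
eexists; last by rewrite /gfun.
rewrite divr_ge0 ?fine_ge0 ?measure_ge0 ?(ltW A_pos) //=.
by rewrite ler_pdivrMr // mul1r fine_le.
Qed.

Lemma itv_between_gaps (R : realType) (U : set R) (a' b' c d x : R) :
  (forall y, a' < y < b' -> U y) -> ~ U c -> ~ U d ->
  c <= x <= d -> a' < x < b' -> c <= a' /\ b' <= d.
Proof.
move=> sub nUc nUd /andP[cx xd] /andP[ax xb]; split.
  by rewrite leNgt; apply/negP => ca; apply: nUc; apply: sub; apply/andP; lra.
by rewrite leNgt; apply/negP => db; apply: nUd; apply: sub; apply/andP; lra.
Qed.

Lemma dvdz2_succ (j : int) : (2 %| j + 1)%Z = ~~ (2 %| j)%Z.
Proof.
have [q [r [-> [r0 r2]]]] : exists q r : int, j = q * 2 + r /\ 0 <= r /\ r < 2.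
  by exists (j %/ 2)%Z, (j %% 2)%Z; rewrite -divz_eq modz_ge0 // ltz_pmod.
have [->|->] : r = 0 \/ r = 1 by lia.
  rewrite addr0; apply/idP/idP; first by case/dvdzP => q' /eqP; lia.
  by move=> /negP; case; apply/dvdzP; exists q.
apply/idP/idP => _; last by apply/dvdzP; exists (q + 1); lia.
by apply/negP; case/dvdzP => q' /eqP; lia.
Qed.

Section ZigZag.
Variables (R : realType) (n : nat) (a b : R) (z : int -> R) (F : R -> R).
Hypothesis z_close : n_close n a b z.
Hypothesis F_zigzag : zigzag n a b z F.

Lemma z_incr (j : int) : z j < z (j + 1).
Proof. by have [/(_ j)[_ []]] := z_close. Qed.

Lemma z_inside (j : int) : a < z j < b.
Proof.
have [/(_ j)[-> _] _] := z_close.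
by have [/(_ (j - 1))[_ [_]]] := z_close; rewrite subrK.
Qed.

Lemma z_gap4 (j : int) :
  z (j + 1) - z j < (4 ^+ n)^-1 * Num.min (z j - a) (b - z (j + 1)).
Proof. by have [_ [_ [_]]] := z_close. Qed.

Lemma z_gap (j : int) : z (j + 1) - z j < Num.min (z j - a) (b - z (j + 1)).
Proof.
apply: (lt_le_trans (z_gap4 j)); apply: ler_piMl.
  have /andP[azj _] := z_inside j; have /andP[_ zb] := z_inside (j + 1).
  by case: (min_cases (z j - a) (b - z (j + 1))) => [[-> ?]|[-> ?]]; lra.
by rewrite invf_le1 ?exprn_gt0 // exprn_ege1 //; lra.
Qed.

(* Since z_j tends to b and to a as j -> +oo, -oo, the [z_j, z_{j+1}] cover (a,b). *)
Lemma z_cover (x : R) : a < x < b -> exists j : int, z j <= x <= z (j + 1).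
Proof.
case/andP=> ax xb; have [_ [to_b [to_a _]]] := z_close.
move: (to_b) => /cvgr_gt /(_ x xb) [N1 _ zN1].
move: (to_a) => /cvgr_lt /(_ x ax) [N2 _ zN2].
have below : z (- N2%:Z) < x by apply: (zN2 N2); rewrite /= leqnn.
pose P := fun m : nat => x < z (- N2%:Z + m%:Z).
have exP : exists m, P m.
  exists (N2 + N1)%N; rewrite /P PoszD addrA addNr add0r.
  by apply: (zN1 N1); rewrite /= leqnn.
case: (ex_minnP exP) => -[|m] Pm m_min.
  by move: Pm; rewrite /P addr0 => /(lt_trans below); rewrite ltxx.
exists (- N2%:Z + m%:Z); apply/andP; split.
  by rewrite leNgt; apply/negP => /m_min; rewrite ltnn.
by move: Pm; rewrite /P -addn1 PoszD addrA => /ltW.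
Qed.

Lemma zigzag_pair (j : int) :
  (F (z j) = F a /\ F (z (j + 1)) = F a + Phi n a b (z (j + 1))) \/
  (F (z j) = F a + Phi n a b (z j) /\ F (z (j + 1)) = F a).
Proof.
have [_ [F_even [F_odd _]]] := F_zigzag.
case: (boolP (2 %| j)%Z) => hj; [left|right].
  by rewrite F_even // F_odd // dvdz2_succ hj.
by rewrite F_odd // F_even // dvdz2_succ.
Qed.

Lemma zigzag_steep (i : int) :
  2 ^+ n * `|z i - z (i + 1)| <= `|F (z i) - F (z (i + 1))|.
Proof.
have step := ltW (z_incr i); have /andP[azi _] := z_inside i.
have /andP[_ zib] := z_inside (i + 1).
have steep y : z i <= y <= z (i + 1) -> 2 ^+ n * (z (i + 1) - z i) <= Phi n a b y.
  by move=> hy; apply: Phi_ge_steep (z_gap4 i).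
rewrite distrC ger0_norm ?subr_ge0 //.
case: (zigzag_pair i) => -[-> ->].
  rewrite opprD addrA subrr add0r normrN ger0_norm ?Phi_ge0 //.
  by apply: steep; rewrite lexx step.
rewrite addrAC subrr add0r ger0_norm ?Phi_ge0 //.
by apply: steep; rewrite lexx step.
Qed.

Lemma gfun_zigzag_le (U : set R) (j : int) (x : R) :
  trim_in U (z j) (z (j + 1)) ->
  exists2 o, o = z j \/ o = z (j + 1) &
    gfun F (z j) (z (j + 1)) U x <= F a + Phi n a b o.
Proof.
move=> trim; have [r /andP[r0 r1] ->] := gfun_convex F x (z_incr j) trim.
case: (zigzag_pair j) => -[-> ->].
  exists (z (j + 1)); first by right.
  by have := ler_piMl (Phi_ge0 n a b (z (j + 1))) r1; lra.
exists (z j); first by left.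
by have := mulr_ge0 r0 (Phi_ge0 n a b (z j)); lra.
Qed.

Lemma zigzag_cap (J : choiceType) (a_ b_ : J -> R) (U : set R) (G : R -> R) :
  (forall i k, i <> k -> `]a_ i, b_ i[%classic `&` `]a_ k, b_ k[%classic = set0) ->
  U = \bigcup_(i in [set: J]) `]a_ i, b_ i[%classic ->
  U `<=` `]a, b[%classic ->
  (forall j : int, trim_in U (z j) (z (j + 1))) ->
  G a = F a -> G b = F a ->
  (forall (j : int) (x : R), z j <= x <= z (j + 1) ->
     G x = gfun F (z j) (z (j + 1)) U x) ->
  forall x : R, a <= x <= b ->
    ((G x)%:E + \esum_(i in [set: J]) (Phi n (a_ i) (b_ i) x)%:E
       <= (G a + 2 * Phi n a b x)%:E)%E.
Proof.
move=> disj defU U_ab trim Ga Gb G_gfun x /andP[ax xb].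
have in_U i y : a_ i < y < b_ i -> U y.
  by move=> yi; rewrite defU; exists i => //=; rewrite in_itv.
rewrite Ga; case: (pselect (a < x < b)) => [x_ab | x_end]; last first.
  have sum0 : (\esum_(i in [set: J]) (Phi n (a_ i) (b_ i) x)%:E <= 0%:E)%E.
    apply: esum_disjoint_Phi_le => // i xi; case: x_end.
    by have := U_ab x (in_U i x xi); rewrite /= in_itv.
  have Gx : G x = F a.
    move: ax xb; rewrite !le_eqVlt => /orP[/eqP<- //|ax].
    by case/orP => [/eqP->//|xb]; case: x_end; rewrite ax xb.
  by rewrite Phi_out // mulr0 addr0 Gx -[leRHS]adde0 leeD2l.
have [j x_j] := z_cover x_ab; have [p p_end G_le] := gfun_zigzag_le x (trim j).
have sum_le : (\esum_(i in [set: J]) (Phi n (a_ i) (b_ i) x)%:E <=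
               (Phi n (z j) (z (j + 1)) x)%:E)%E.
  apply: esum_disjoint_Phi_le => // [|i xi]; first exact: Phi_ge0.
  have [_ [_ [nUc nUd]]] := trim j.
  have [ca bd] := itv_between_gaps (in_U i) nUc nUd x_j xi.
  exact: Phi_sub_itv.
apply: le_trans (leeD (lexx _) sum_le) _; rewrite -EFinD lee_fin (G_gfun j x x_j).
by have := Phi_endpoint_local n (z_gap j) p_end x_j; lra.
Qed.

End ZigZag.

Theorem mainTheorem5 (R : realType) (n : nat) (a b : R) (z : int -> R) (F : R -> R) :
  a < b -> n_close n a b z -> zigzag n a b z F ->
  (forall i : int, 2 ^+ n * `|z i - z (i + 1)| <= `|F (z i) - F (z (i + 1))|) /\
  (forall (J : choiceType) (a_ b_ : J -> R) (U : set R) (G : R -> R),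
     (forall i, a_ i < b_ i) ->
     (forall i k, i <> k -> `]a_ i, b_ i[%classic `&` `]a_ k, b_ k[%classic = set0) ->
     U = \bigcup_(i in [set: J]) `]a_ i, b_ i[%classic ->
     U `<=` `]a, b[%classic ->
     (forall j : int, trim_in U (z j) (z (j + 1))) ->
     G a = F a -> G b = F a ->
     (forall (j : int) (x : R), z j <= x <= z (j + 1) ->
        G x = gfun F (z j) (z (j + 1)) U x) ->
     forall x : R, a <= x <= b ->
       ((G x)%:E + \esum_(i in [set: J]) (Phi n (a_ i) (b_ i) x)%:E
          <= (G a + 2 * Phi n a b x)%:E)%E).
Proof.
move=> _ z_close F_zigzag; split; first exact: (zigzag_steep z_close F_zigzag).
by move=> J a_ b_ U G _; apply: (zigzag_cap z_close F_zigzag).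
Qed.
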